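(* Let $0<b\le 0.01$ and let $(x_3,x,x,y_3,y,y)$ with $x_3,y_3,x,y>0$ be a point of the curve of equilibria $\mathcal C$. Let $$M=\begin{pmatrix}-x_3(1-y_3)-y_3(1-x_3)-4xy & -4y & -4x\\ x(y_3+y)/2 & -bx_3/x & x\\ y(x_3+x)/2 & y & -by_3/y\end{pmatrix}=(m_{ij}),$$ and $b_2=(m_{11}m_{22}-m_{12}m_{21})+(m_{22}m_{33}-m_{23}m_{32})+(m_{11}m_{33}-m_{13}m_{31})$. Then $\det(M)>b_2\,\mathrm{trace}(M)$.
   Context: Haploid unlinked subfunctionalization model with mutation rate $b$, $\alpha=1-3b$, $w=x_3+y_3-x_3y_3+x_1y_2+x_2y_1$, vector field $F$: $F_{x_3}=x_3(\alpha-w)$; $F_{x_2}=-x_2w+x_2(y_3+y_1)+bx_3-2bx_2$; $F_{x_1}=-x_1w+x_1(y_3+y_2)+bx_3-2bx_1$; $F_{y_3}=y_3(\alpha-w)$; $F_{y_2}=-y_2w+y_2(x_3+x_1)+by_3-2by_2$; $F_{y_1}=-y_1w+y_1(x_3+x_2)+by_3-2by_1$. The curve of equilibria $\mathcal C$ is the one-parameter family of fixed points of $dz/dt=F(z)$ with $x_1=x_2=x$, $y_1=y_2=y$, parametrized by $x_3$ via $y_3=\frac{-d_1+\sqrt{d_1^2-4d_0d_2}}{2d_2}$ with $d_2=-(1-x_3)^2$, $d_1=2(1-x_3)^2-4b(1-x_3)+2b^2(1+x_3)$, $d_0=-(1-x_3)^2+4b(1-x_3)-b^2(5-2x_3)+b^3$,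 and $x=\frac{\Gamma-2bx_3}{2(y_3-\beta)}$, $y=\frac{\Gamma-2by_3}{2(x_3-\beta)}$, $\beta=1-b$, $\Gamma=x_3+y_3-x_3y_3-\alpha$. *)

From Stdlib Require Import Reals Lra.
Open Scope R_scope.

(* Haploid unlinked subfunctionalization model, mutation rate b. *)
Definition alpha (b : R) : R := 1 - 3 * b.

Definition wfit (x3 x2 x1 y3 y2 y1 : R) : R :=
  x3 + y3 - x3 * y3 + x1 * y2 + x2 * y1.

Definition F_x3 (b x3 x2 x1 y3 y2 y1 : R) : R :=
  x3 * (alpha b - wfit x3 x2 x1 y3 y2 y1).
Definition F_x2 (b x3 x2 x1 y3 y2 y1 : R) : R :=
  - x2 * wfit x3 x2 x1 y3 y2 y1 + x2 * (y3 + y1) + b * x3 - 2 * b * x2.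
Definition F_x1 (b x3 x2 x1 y3 y2 y1 : R) : R :=
  - x1 * wfit x3 x2 x1 y3 y2 y1 + x1 * (y3 + y2) + b * x3 - 2 * b * x1.
Definition F_y3 (b x3 x2 x1 y3 y2 y1 : R) : R :=
  y3 * (alpha b - wfit x3 x2 x1 y3 y2 y1).
Definition F_y2 (b x3 x2 x1 y3 y2 y1 : R) : R :=
  - y2 * wfit x3 x2 x1 y3 y2 y1 + y2 * (x3 + x1) + b * y3 - 2 * b * y2.
Definition F_y1 (b x3 x2 x1 y3 y2 y1 : R) : R :=
  - y1 * wfit x3 x2 x1 y3 y2 y1 + y1 * (x3 + x2) + b * y3 - 2 * b * y1.

Definition is_equilibrium (b x3 x2 x1 y3 y2 y1 : R) : Prop :=
  F_x3 b x3 x2 x1 y3 y2 y1 = 0 /\ F_x2 b x3 x2 x1 y3 y2 y1 = 0 /\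
  F_x1 b x3 x2 x1 y3 y2 y1 = 0 /\ F_y3 b x3 x2 x1 y3 y2 y1 = 0 /\
  F_y2 b x3 x2 x1 y3 y2 y1 = 0 /\ F_y1 b x3 x2 x1 y3 y2 y1 = 0.

(* Parametrization of the curve C by x3. *)
Definition d2 (x3 : R) : R := - (1 - x3) ^ 2.
Definition d1 (b x3 : R) : R :=
  2 * (1 - x3) ^ 2 - 4 * b * (1 - x3) + 2 * b ^ 2 * (1 + x3).
Definition d0 (b x3 : R) : R :=
  - (1 - x3) ^ 2 + 4 * b * (1 - x3) - b ^ 2 * (5 - 2 * x3) + b ^ 3.

Definition C_y3 (b x3 : R) : R :=
  (- d1 b x3 + sqrt (d1 b x3 ^ 2 - 4 * d0 b x3 * d2 x3)) / (2 * d2 x3).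

Definition betaB (b : R) : R := 1 - b.
Definition Gamma (b x3 y3 : R) : R := x3 + y3 - x3 * y3 - alpha b.

Definition C_x (b x3 y3 : R) : R := (Gamma b x3 y3 - 2 * b * x3) / (2 * (y3 - betaB b)).
Definition C_y (b x3 y3 : R) : R := (Gamma b x3 y3 - 2 * b * y3) / (2 * (x3 - betaB b)).

Definition on_curve_C (b x3 x y3 y : R) : Prop :=
  is_equilibrium b x3 x x y3 y y /\
  y3 = C_y3 b x3 /\ x = C_x b x3 y3 /\ y = C_y b x3 y3.

Definition m11 (x3 x y3 y : R) : R := - x3 * (1 - y3) - y3 * (1 - x3) - 4 * x * y.
Definition m12 (y : R) : R := - 4 * y.
Definition m13 (x : R) : R := - 4 * x.
Definition m21 (x y3 y : R) : R := x * (y3 + y) / 2.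
Definition m22 (b x3 x : R) : R := - b * x3 / x.
Definition m23 (x : R) : R := x.
Definition m31 (x3 x y : R) : R := y * (x3 + x) / 2.
Definition m32 (y : R) : R := y.
Definition m33 (b y3 y : R) : R := - b * y3 / y.

Definition det3 (a11 a12 a13 a21 a22 a23 a31 a32 a33 : R) : R :=
  a11 * (a22 * a33 - a23 * a32) - a12 * (a21 * a33 - a23 * a31)
  + a13 * (a21 * a32 - a22 * a31).

Definition detM (b x3 x y3 y : R) : R :=
  det3 (m11 x3 x y3 y) (m12 y) (m13 x)
       (m21 x y3 y) (m22 b x3 x) (m23 x)
       (m31 x3 x y) (m32 y) (m33 b y3 y).

Definition traceM (b x3 x y3 y : R) : R :=
  m11 x3 x y3 y + m22 b x3 x + m33 b y3 y.

Definition b2M (b x3 x y3 y : R) : R :=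
  (m11 x3 x y3 y * m22 b x3 x - m12 y * m21 x y3 y)
  + (m22 b x3 x * m33 b y3 y - m23 x * m32 y)
  + (m11 x3 x y3 y * m33 b y3 y - m13 x * m31 x3 x y).

(** The inequality det M > b2 tr M is the Routh–Hurwitz condition for the
    characteristic polynomial of M. Writing the diagonal of M as -A, -C, -D,
    the gap det M - b2 tr M is, identically,
      (C + D) ((A + C)(A + D) - x y) + 4 y m21 (A + C - x) + 4 x m31 (A + D - y),
    so it suffices that x and y are both smaller than A. On the curve, with
    u = 1 - x3 and v = 1 - y3, the equilibrium equations give x < u/2, y < v/2
    and u v = 3 b + 2 x y, hence u v < 6 b is small; then A = u + v - 2 u v + 4 x y
    exceeds u/2 and v/2 by AM-GM. *)

From Stdlib Require Import Reals Lra.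
Open Scope R_scope.

Definition hurwitz_gap (A C D p q x y : R) : R :=
  (C + D) * ((A + C) * (A + D) - x * y)
  + 4 * y * p * (A + C - x) + 4 * x * q * (A + D - y).

Lemma detM_sub_b2M_traceM (b x3 x y3 y : R) :
  detM b x3 x y3 y - b2M b x3 x y3 y * traceM b x3 x y3 y =
  hurwitz_gap (- m11 x3 x y3 y) (- m22 b x3 x) (- m33 b y3 y)
              (m21 x y3 y) (m31 x3 x y) x y.
Proof.
  unfold detM, b2M, traceM, det3, hurwitz_gap,
    m11, m12, m13, m21, m22, m23, m31, m32, m33.
  ring.
Qed.

Lemma hurwitz_gap_pos (A C D p q x y : R) :
  0 < x -> 0 < y -> 0 < p -> 0 < q -> 0 < C -> 0 < D -> x < A -> y < A ->
  0 < hurwitz_gap A C D p q x y.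
Proof.
  intros Hx Hy Hp Hq HC HD HxA HyA; unfold hurwitz_gap.
  assert (Hxy : x * y < (A + C) * (A + D)).
  { apply Rmult_le_0_lt_compat; lra. }
  assert (H1 : 0 < (C + D) * ((A + C) * (A + D) - x * y)).
  { apply Rmult_lt_0_compat; lra. }
  assert (H2 : 0 < 4 * y * p * (A + C - x)).
  { repeat apply Rmult_lt_0_compat; lra. }
  assert (H3 : 0 < 4 * x * q * (A + D - y)).
  { repeat apply Rmult_lt_0_compat; lra. }
  lra.
Qed.

Lemma double_prod_le_half_add (u v : R) :
  0 <= u -> 0 <= v -> 2 * u * v <= 1 -> 2 * u * v <= u / 2 + v.
Proof.
  intros Hu Hv Huv.
  assert (Hamgm : 2 * u * v <= (u / 2 + v) ^ 2).
  { pose proof (pow2_ge_0 (u / 2 - v)); nra. }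
  destruct (Rle_or_lt (2 * u * v) (u / 2 + v)) as [Hle | Hlt]; [exact Hle |].
  exfalso; nra.
Qed.

Lemma equilibrium_fitness (b x3 x y3 y : R) :
  0 < x3 -> is_equilibrium b x3 x x y3 y y ->
  x3 + y3 - x3 * y3 + 2 * x * y = 1 - 3 * b.
Proof.
  intros Hx3 [Ex3 _]; unfold F_x3, wfit, alpha in Ex3.
  apply Rmult_integral in Ex3 as [H | H]; lra.
Qed.

Lemma equilibrium_balance (b x3 x y3 y : R) :
  0 < x3 -> is_equilibrium b x3 x x y3 y y ->
  x * (1 - b - y3 - y) = b * x3 /\ y * (1 - b - x3 - x) = b * y3.
Proof.
  intros Hx3 Heq; pose proof (equilibrium_fitness b x3 x y3 y Hx3 Heq) as Hw.
  destruct Heq as [_ [Ex2 [_ [_ [Ey2 _]]]]].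
  unfold F_x2, F_y2, wfit in Ex2, Ey2.
  split; nra.
Qed.

Lemma balance_slack_pos (b x3 x s : R) :
  0 < b -> 0 < x3 -> 0 < x -> x * s = b * x3 -> 0 < s.
Proof.
  intros Hb Hx3 Hx Hbal.
  assert (Hbx3 : 0 < b * x3) by (apply Rmult_lt_0_compat; assumption).
  destruct (Rle_or_lt s 0) as [Hs | Hs]; [nra | exact Hs].
Qed.

Lemma twice_lt_of_balance (b x3 x y3 y : R) :
  0 < b -> x3 < 1 -> 0 < 1 - b - y3 ->
  x3 + y3 - x3 * y3 + 2 * x * y = 1 - 3 * b ->
  x * (1 - b - y3 - y) = b * x3 ->
  2 * x < 1 - x3.
Proof.
  intros Hb Hx3 Hs Hw Hbal.
  assert (Hgap : (1 - x3) * (1 - b - y3) - 2 * x * (1 - b - y3) = b * (2 - x3)) by nra.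
  apply (Rmult_lt_reg_r (1 - b - y3)); nra.
Qed.

Lemma lt_diag_of_half_bounds (x3 x y3 y : R) :
  0 < x -> 0 < y ->
  2 * x < 1 - x3 -> 2 * y < 1 - y3 ->
  2 * (1 - x3) * (1 - y3) <= 1 ->
  x < x3 * (1 - y3) + y3 * (1 - x3) + 4 * x * y.
Proof.
  intros Hx Hy Hxu Hyv Huv.
  pose proof (double_prod_le_half_add (1 - x3) (1 - y3) ltac:(lra) ltac:(lra) Huv) as Hle.
  assert (Hxy : 0 < x * y) by (apply Rmult_lt_0_compat; assumption).
  nra.
Qed.

Theorem lemma3 (b x3 x y3 y : R) :
  0 < b -> b <= 1 / 100 ->
  0 < x3 -> 0 < y3 -> 0 < x -> 0 < y ->
  on_curve_C b x3 x y3 y ->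
  detM b x3 x y3 y > b2M b x3 x y3 y * traceM b x3 x y3 y.
Proof.
  intros Hb Hb1 Hx3 Hy3 Hx Hy [Heq _].
  pose proof (equilibrium_fitness b x3 x y3 y Hx3 Heq) as Hw.
  destruct (equilibrium_balance b x3 x y3 y Hx3 Heq) as [Hbx Hby].
  pose proof (balance_slack_pos b x3 x _ Hb Hx3 Hx Hbx) as Hsx.
  pose proof (balance_slack_pos b y3 y _ Hb Hy3 Hy Hby) as Hsy.
  pose proof (twice_lt_of_balance b x3 x y3 y Hb ltac:(lra) ltac:(lra) Hw Hbx) as Hxu.
  pose proof (twice_lt_of_balance b y3 y x3 x Hb ltac:(lra) ltac:(lra) ltac:(lra) Hby) as Hyv.
  assert (Huv : (1 - x3) * (1 - y3) < 6 * b).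
  { assert ((2 * x) * (2 * y) < (1 - x3) * (1 - y3))
      by (apply Rmult_le_0_lt_compat; lra).
    nra. }
  pose proof (lt_diag_of_half_bounds x3 x y3 y Hx Hy Hxu Hyv ltac:(lra)) as HxA.
  pose proof (lt_diag_of_half_bounds y3 y x3 x Hy Hx Hyv Hxu ltac:(lra)) as HyA.
  apply Rlt_0_minus; rewrite detM_sub_b2M_traceM.
  assert (HC : 0 < b * x3 / x) by (apply Rdiv_lt_0_compat; nra).
  assert (HD : 0 < b * y3 / y) by (apply Rdiv_lt_0_compat; nra).
  apply hurwitz_gap_pos; unfold m11, m21, m22, m31, m33; try lra.
  - apply Rdiv_lt_0_compat; nra.
  - apply Rdiv_lt_0_compat; nra.
Qed.
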